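(* Let $\mathbf{A}=[\mathbf{a}_1,\dots,\mathbf{a}_L]\in\mathbb{C}^{N\times L}$ have unit-norm columns, and let $\mu=\max_{p\neq q}|\langle \mathbf{a}_p,\mathbf{a}_q\rangle|$ be its mutual coherence, assumed to satisfy $\mu>0$. Let $K$ be a positive integer with $K<\tfrac12(\mu^{-1}+1)$, let $\mathcal{S}\subset\{1,\dots,L\}$ with $|\mathcal{S}|=K$, and let $\mathbf{x}\in\mathbb{C}^L$ be given by $x_i=1$ for $i\in\mathcal{S}$ and $x_i=0$ otherwise (the case $M=1$, i.e. constellation $\mathcal{B}=\{1\}$). Let the observation be noiseless, $\mathbf{y}=\mathbf{A}\mathbf{x}=\sum_{i\in\mathcal{S}}\mathbf{a}_i$. Then the Match and Decode (MAD) algorithm with $M=1$ (defined in the context), run with inputs $\mathbf{A},\mathbf{y},K$ and no partial information, outputs $\hat{\mathbf{x}}^{(K)}=\mathbf{x}$; in particular the recovered codeword $\hat{\mathbf{s}}=\mathbf{A}\hat{\mathbf{x}}^{(K)}$ equals the transmitted codeword $\mathbf{s}=\mathbf{A}\mathbf{x}$.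
   Context: Inner product: $\langle \mathbf{u},\mathbf{v}\rangle=\mathbf{v}^*\mathbf{u}$ on $\mathbb{C}^N$. MAD algorithm with $M=1$ (constellation $\mathcal{B}=\{1\}$): initialize $t=0$, $\hat{\mathcal{S}}=\emptyset$, residual $\mathbf{r}^{(0)}=\mathbf{y}$, estimate $\hat{\mathbf{x}}^{(0)}=\mathbf{0}$. While $t<K$: compute $c_i=\langle \mathbf{r}^{(t)},\mathbf{a}_i\rangle$ for $i\notin\hat{\mathcal{S}}$ and the metric $p_i=\mathrm{Re}\{c_i\}-\tfrac12$; select $\hat i=\arg\max_{i\notin\hat{\mathcal{S}}}p_i$; update $\hat{\mathcal{S}}\leftarrow\hat{\mathcal{S}}\cup\{\hat i\}$, $\hat{\mathbf{x}}^{(t+1)}=\hat{\mathbf{x}}^{(t)}+\mathbf{e}_{\hat i}$ ($\mathbf{e}_n$ the $n$-th standard basis vector of $\mathbb{C}^L$), $\mathbf{r}^{(t+1)}=\mathbf{r}^{(t)}-\mathbf{a}_{\hat i}$, and $t\leftarrow t+1$. Output $\hat{\mathbf{x}}^{(K)}$. *)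

(* Complex scalars: an arbitrary numClosedFieldType C
   (e.g. the complex numbers R[i] over a real closed field, or algC). *)
From HB Require Import structures.
From mathcomp Require Import all_boot all_order all_algebra.
Set Implicit Arguments. Unset Strict Implicit. Unset Printing Implicit Defensive.
Import Order.TTheory GRing.Theory Num.Theory.
Local Open Scope ring_scope.

Section MAD.
Variable C : numClosedFieldType.

Definition cdot (N : nat) (u v : 'cV[C]_N) : C :=
  \sum_(k < N) u k 0 * (v k 0)^*.

(* mutual coherence mu = max_{p <> q} |<a_p, a_q>| (0 if L <= 1) *)
Definition coherence (N L : nat) (A : 'M[C]_(N, L)) : C :=
  \big[Num.max/0]_(p < L) \big[Num.max/0]_(q < L | p != q)
     `|cdot (col p A) (col q A)|.

Definition ebasis (L : nat) (n : 'I_L) : 'cV[C]_L := delta_mx n 0.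

Definition indic_vec (L : nat) (S : {set 'I_L}) : 'cV[C]_L :=
  \col_(i < L) (if i \in S then 1 else 0).

Definition mad_metric (N L : nat) (A : 'M[C]_(N, L)) (r : 'cV[C]_N) (i : 'I_L) : C :=
  'Re (cdot r (col i A)) - 2^-1.

(* MAD state: (support estimate S^, estimate x^, residual r) *)
Definition mad_state (N L : nat) := ({set 'I_L} * 'cV[C]_L * 'cV[C]_N)%type.

(* One iteration of MAD (M = 1); the argmax is allowed to be any maximiser
   (arbitrary tie-breaking). *)
Definition mad_step (N L : nat) (A : 'M[C]_(N, L)) (st st' : mad_state N L) : Prop :=
  let: (Sh, x, r) := st in
  exists i : 'I_L,
    [/\ i \notin Sh,
        (forall j : 'I_L, j \notin Sh -> mad_metric A r j <= mad_metric A r i)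
      & st' = (i |: Sh, x + ebasis i, r - col i A)].

Definition mad_output (N L : nat) (A : 'M[C]_(N, L)) (y : 'cV[C]_N) (K : nat)
  (xout : 'cV[C]_L) : Prop :=
  exists st : nat -> mad_state N L,
    [/\ st 0%N = (set0, 0, y),
        (forall t, (t < K)%N -> mad_step A (st t) (st t.+1))
      & (st K).1.2 = xout].

End MAD.

From HB Require Import structures.
From mathcomp Require Import all_boot all_order all_algebra.
From mathcomp Require Import ring.
Import Order.TTheory GRing.Theory Num.Theory.
Local Open Scope ring_scope.

(* For D a set of columns, call A *m indic_vec D the residual of D.  The
   heart of the proof is a separation property: if mu (2|D| - 1) < 1, the
   MAD metric of the residual of D is strictly larger at every column of D
   than at every column outside D.  Indeed, for j in D the correlation is
   1 + (|D| - 1 cross terms) >= 1 - (|D| - 1) mu, while for k outside D it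
   is a sum of |D| cross terms <= |D| mu; each cross term is bounded by the
   coherence.

   Call "ideal" the state (Sh, indic Sh, residual of S \ Sh) with Sh a
   subset of the true support S.  The initial state is ideal for Sh = set0;
   by separation, any MAD step from an ideal state with |Sh| < K picks a
   column of S \ Sh and yields the ideal state of Sh + {i}.  Hence every run
   of K steps ends in the ideal state of a K-subset of S, i.e. of S itself,
   whose estimate is x.  A run exists because a maximiser of the (real
   valued) metric always exists over a nonempty finite set of candidates. *)

Lemma le_bigmax_real (R : numDomainType) (I : finType) (P : pred I)
    (F : I -> R) (i : I) :
  (forall j, P j -> F j \is Num.real) -> P i ->
  F i <= \big[Num.max/0]_(j | P j) F j.
Proof.
move=> Freal Pi; rewrite unlock.
elim: (index_enum I) (mem_index_enum i) => [//|a r IH]; rewrite inE /=.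
have maxr_real : \big[Num.max/0]_(j <- r | P j) F j \is Num.real.
  by apply: bigmax_real => // j Pj; exact: Freal.
rewrite unlock in maxr_real.
case/orP=> [/eqP <- | ir].
  by rewrite Pi comparable_le_max ?lexx ?real_comparable ?Freal.
case: ifP => Pa; last exact: IH.
by rewrite comparable_le_max ?IH ?orbT ?real_comparable ?Freal.
Qed.

Lemma seq_real_argmax (R : numDomainType) (T : eqType) (s : seq T)
    (f : T -> R) :
  (forall i, f i \is Num.real) -> s != [::] ->
  exists2 i, i \in s & forall j, j \in s -> f j <= f i.
Proof.
move=> freal; elim: s => [//|x s IH] _.
have [-> | /IH [m ms m_max]] := eqVneq s [::].
  by exists x; rewrite ?inE // => j; rewrite inE => /eqP ->.
have [xm | mx] := real_leP (freal x) (freal m).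
  exists m; first by rewrite inE ms orbT.
  by move=> j; rewrite inE => /orP[/eqP -> | /m_max].
exists x; first by rewrite inE eqxx.
by move=> j; rewrite inE => /orP[/eqP -> // | /m_max/le_trans]; apply; exact: ltW.
Qed.

Lemma real_argmax (R : numDomainType) (T : finType) (P : pred T) (f : T -> R) :
  (forall i, f i \is Num.real) -> (exists i, P i) ->
  exists2 i, P i & forall j, P j -> f j <= f i.
Proof.
move=> freal [i0 Pi0].
have [|i] := @seq_real_argmax _ _ (enum P) f freal.
  by apply/eqP => enumP; move: (mem_enum P i0); rewrite enumP in_nil unfold_in Pi0.
by rewrite mem_enum => Pi i_max; exists i => // j Pj; apply: i_max; rewrite mem_enum.
Qed.

Lemma Re_bound {C : numClosedFieldType} {z m : C} :
  `|z| <= m -> -m <= 'Re z /\ 'Re z <= m.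
Proof.
move=> zm; have Re_m : `|'Re z| <= m := le_trans (leif_normC_Re_Creal z).1 zm.
split; first exact: real_lerNnormlW (Creal_Re z) Re_m.
exact: le_trans (real_ler_norm (Creal_Re z)) Re_m.
Qed.

Lemma coherence_condition {C : numClosedFieldType} {mu : C} {K : nat} :
  0 < mu -> K%:R < 2^-1 * (mu^-1 + 1) -> mu *+ (K + K) < 1 + mu.
Proof.
move=> mu_gt0; rewrite ltr_pdivlMl ?ltr0n // -(ltr_pM2r mu_gt0).
have -> : (mu^-1 + 1) * mu = 1 + mu by rewrite mulrDl mulVf ?gt_eqF ?mul1r.
suff -> : mu *+ (K + K) = 2 * K%:R * mu by [].
by rewrite -[mu *+ _]mulr_natr natrD; ring.
Qed.

Lemma indic_setU1 (C : numClosedFieldType) (L : nat) (D : {set 'I_L}) (i : 'I_L) :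
  i \notin D -> indic_vec C (i |: D) = indic_vec C D + ebasis C i.
Proof.
move=> iD; apply/matrixP => a b; rewrite !mxE (ord1 b) eqxx andbT !inE.
by case: (a =P i) => [-> | _] /=; rewrite ?(negbTE iD) ?add0r ?addr0.
Qed.

Lemma indic_setD1 (C : numClosedFieldType) (L : nat) (D : {set 'I_L}) (i : 'I_L) :
  i \in D -> indic_vec C (D :\ i) = indic_vec C D - ebasis C i.
Proof.
move=> iD; apply/matrixP => a b; rewrite !mxE (ord1 b) eqxx andbT !inE.
by case: (a =P i) => [-> | _] /=; rewrite ?iD ?subrr ?subr0.
Qed.

Section Recovery.
Context {C : numClosedFieldType} {N L : nat} (A : 'M[C]_(N, L)).

Lemma cdot_le_coherence {p q : 'I_L} :
  p != q -> `|cdot (col p A) (col q A)| <= coherence A.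
Proof.
move=> pq; rewrite /coherence.
set row_max := fun p' => \big[Num.max/0]_(q' < L | p' != q')
  `|cdot (col p' A) (col q' A)|.
have row_real p' : row_max p' \is Num.real.
  by apply: bigmax_real => // q' _; exact: normr_real.
apply: le_trans (@le_bigmax_real _ _ xpredT row_max p (fun p' _ => row_real p') isT).
by apply: le_bigmax_real => // q' _; exact: normr_real.
Qed.

Lemma cdot_mulmx (v : 'cV[C]_L) (w : 'cV[C]_N) :
  cdot (A *m v) w = \sum_i v i 0 * cdot (col i A) w.
Proof.
rewrite /cdot; under eq_bigr do rewrite mxE big_distrl.
rewrite exchange_big; apply: eq_bigr => i _; rewrite big_distrr.
by apply: eq_bigr => k _; rewrite !mxE /= mulrAC mulrC.
Qed.

Lemma cdot_residual (D : {set 'I_L}) (w : 'cV[C]_N) :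
  cdot (A *m indic_vec C D) w = \sum_(i in D) cdot (col i A) w.
Proof.
rewrite cdot_mulmx [RHS]big_mkcond; apply: eq_bigr => i _; rewrite mxE.
by case: ifP; rewrite ?mul1r ?mul0r.
Qed.

Hypothesis unit_cols : forall i : 'I_L, cdot (col i A) (col i A) = 1.

Lemma metric_separation {D : {set 'I_L}} {j k : 'I_L} :
  coherence A *+ (#|D| + #|D|) < 1 + coherence A -> j \in D -> k \notin D ->
  mad_metric A (A *m indic_vec C D) k < mad_metric A (A *m indic_vec C D) j.
Proof.
set mu := coherence A => cond jD kD.
rewrite /mad_metric ltrD2r !cdot_residual !raddf_sum /=.
have off_D : \sum_(i in D) 'Re (cdot (col i A) (col k A)) <= mu *+ #|D|.
  rewrite -sumr_const; apply: ler_sum => i iD.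
  by apply: (Re_bound (cdot_le_coherence _)).2; apply: contraNneq kD => <-.
have cross_terms :
    mu - mu *+ #|D| <= \sum_(i in D | i != j) 'Re (cdot (col i A) (col j A)).
  have -> : mu - mu *+ #|D| = \sum_(i in D | i != j) (- mu).
    by apply: (addrI (- mu)); rewrite -(bigD1 j) //= sumr_const addKr mulNrn.
  by apply: ler_sum => i /andP[_ ij]; exact: (Re_bound (cdot_le_coherence ij)).1.
have Re1 : 'Re (1 : C) = 1 by apply/Creal_ReP; exact: rpred1.
rewrite [X in _ < X](bigD1 j) //= unit_cols Re1.
apply: (le_lt_trans off_D); apply: (@lt_le_trans _ _ (1 + (mu - mu *+ #|D|))).
  by rewrite addrA ltrBrDr -mulrnDr.
by rewrite lerD2l.
Qed.

Lemma mad_metric_real (r : 'cV[C]_N) (i : 'I_L) : mad_metric A r i \is Num.real.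
Proof. by rewrite /mad_metric rpredB ?Creal_Re // ger0_real // invr_ge0 ler0n. Qed.

Lemma mad_argmax_exists (st : mad_state C N L) :
  (exists i, i \notin st.1.1) ->
  exists2 i, i \notin st.1.1 &
    forall j, j \notin st.1.1 -> mad_metric A st.2 j <= mad_metric A st.2 i.
Proof. exact: real_argmax (mad_metric_real st.2). Qed.

Definition mad_next (st : mad_state C N L) : mad_state C N L :=
  let: (Sh, x, r) := st in
  if [pick i | (i \notin Sh) &&
       [forall j, (j \notin Sh) ==> (mad_metric A r j <= mad_metric A r i)]]
    is Some i then (i |: Sh, x + ebasis C i, r - col i A) else st.

Lemma mad_next_step (st : mad_state C N L) :
  (exists i, i \notin st.1.1) -> mad_step A st (mad_next st).
Proof.
move=> /mad_argmax_exists; case: st => [[Sh x] r] /= [i0 i0Sh i0_max].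
case: pickP => [i /andP[iSh /forallP i_max] | none].
  by exists i; split => // j jSh; move: (i_max j); rewrite jSh.
move: (none i0); rewrite i0Sh /=; move/negP; case.
by apply/forallP => j; apply/implyP; exact: i0_max.
Qed.

Context {S : {set 'I_L}} {K : nat}.
Hypothesis card_S : #|S| = K.
Hypothesis coherence_ge0 : 0 <= coherence A.
Hypothesis coherence_small : coherence A *+ (K + K) < 1 + coherence A.

Definition ideal_state (Sh : {set 'I_L}) : mad_state C N L :=
  (Sh, indic_vec C Sh, A *m indic_vec C (S :\: Sh)).

Definition ideal_after (t : nat) (st : mad_state C N L) : Prop :=
  exists2 Sh : {set 'I_L}, (Sh \subset S) && (#|Sh| == t) & st = ideal_state Sh.

Lemma undetected_exists {Sh : {set 'I_L}} :
  Sh \subset S -> (#|Sh| < K)%N -> exists i, i \in S :\: Sh.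
Proof.
move=> ShS ShK; apply/set0Pn.
by rewrite -card_gt0 cardsD (setIidPr ShS) card_S subn_gt0.
Qed.

Lemma mad_step_from_ideal (Sh : {set 'I_L}) (st' : mad_state C N L) :
  Sh \subset S -> (#|Sh| < K)%N -> mad_step A (ideal_state Sh) st' ->
  exists2 i, i \in S :\: Sh & st' = ideal_state (i |: Sh).
Proof.
move=> ShS ShK [i [iSh i_max ->]].
have [j0 j0D] := undetected_exists ShS ShK.
set D := S :\: Sh in i_max j0D *.
have D_small : coherence A *+ (#|D| + #|D|) < 1 + coherence A.
  apply: le_lt_trans coherence_small; apply: ler_wpMn2l => //.
  by rewrite -card_S leq_add ?subset_leq_card ?subsetDl.
have iD : i \in D.
  apply: contraT => iD.
  have j0Sh : j0 \notin Sh by move: j0D; rewrite inE => /andP[].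
  by move: (i_max j0 j0Sh); rewrite (lt_geF (metric_separation D_small j0D iD)).
exists i => //; rewrite /ideal_state indic_setU1 // colE -mulmxBr -indic_setD1 //.
by rewrite setDDl setUC.
Qed.

Lemma ideal_after_step (t : nat) (st st' : mad_state C N L) :
  (t < K)%N -> ideal_after t st -> mad_step A st st' -> ideal_after t.+1 st'.
Proof.
move=> tK [Sh /andP[ShS /eqP card_Sh] ->] /mad_step_from_ideal.
rewrite card_Sh => /(_ ShS tK) [i /setDP[iS iSh] ->].
exists (i |: Sh) => //.
by rewrite subUset sub1set iS ShS cardsU1 iSh card_Sh /= add1n.
Qed.

Lemma ideal_after_next {t : nat} {st : mad_state C N L} :
  (t < K)%N -> ideal_after t st -> mad_step A st (mad_next st).
Proof.
move=> tK [Sh /andP[ShS /eqP card_Sh] ->]; apply: mad_next_step.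
rewrite -card_Sh in tK; have [i /setDP[_ iSh]] := undetected_exists ShS tK.
by exists i.
Qed.

Lemma mad_run_ideal (st : nat -> mad_state C N L) :
  st 0%N = ideal_state set0 ->
  (forall t, (t < K)%N -> ideal_after t (st t) -> mad_step A (st t) (st t.+1)) ->
  forall t, (t <= K)%N -> ideal_after t (st t).
Proof.
move=> st0 run; elim=> [|t IH] tK; first by exists set0; rewrite ?sub0set ?cards0.
by apply: ideal_after_step tK (IH (ltnW tK)) (run t tK (IH (ltnW tK))).
Qed.

Lemma ideal_after_K {st : mad_state C N L} :
  ideal_after K st -> st.1.2 = indic_vec C S.
Proof.
case=> Sh /andP[ShS /eqP card_Sh] ->.
suff -> : Sh = S by [].
by apply/eqP; rewrite eqEcard ShS card_Sh card_S /=.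
Qed.

End Recovery.

Arguments ideal_state {C N L} A S Sh.

Theorem lemma1 (C : numClosedFieldType) (N L : nat) (A : 'M[C]_(N, L))
  (K : nat) (S : {set 'I_L}) :
  (forall i : 'I_L, cdot (col i A) (col i A) = 1) ->
  0 < coherence A ->
  (0 < K)%N ->
  K%:R < 2^-1 * ((coherence A)^-1 + 1) ->
  #|S| = K ->
  let x := indic_vec C S in
  let y := A *m x in
  (exists xout, mad_output A y K xout) /\
  (forall xout, mad_output A y K xout -> xout = x /\ A *m xout = A *m x).
Proof.
move=> unit_cols mu_gt0 _ K_small card_S x y.
have small := coherence_condition mu_gt0 K_small.
have mu_ge0 := ltW mu_gt0.
have start : (set0, 0, y) = ideal_state A S set0.
  by rewrite /ideal_state setD0; congr (_, _, _); apply/matrixP => a b; rewrite !mxE inE.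
split.
  pose run t := iter t (mad_next A) (set0, 0, y).
  have run_ideal := mad_run_ideal A unit_cols card_S mu_ge0 small run start
    (fun t tK => ideal_after_next A card_S tK).
  exists (run K).1.2, run; split => // t tK.
  by have := ideal_after_next A card_S tK (run_ideal t (ltnW tK)).
move=> xout [run [run0 run_steps <-]].
have run_ideal := mad_run_ideal A unit_cols card_S mu_ge0 small run (etrans run0 start)
  (fun t tK _ => run_steps t tK).
by rewrite (ideal_after_K A card_S (run_ideal K (leqnn K))).
Qed.
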